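(* Let $W\subseteq\mathbb{R}^m$ be a nonempty closed convex set with Euclidean projection $\Pi_W$, and let $g_1,\dots,g_n:\mathbb{R}^m\to\mathbb{R}$ be convex. Let $F=\frac1n\sum_{j=1}^n g_j$ be $\mu$-strongly convex on $W$ with $\mu>0$, and let $\boldsymbol{x}_*=\arg\min_{\boldsymbol{x}\in W}F(\boldsymbol{x})$. Let $b$ divide $n$, let $d=n/b$, and let $\tau_1,\dots,\tau_d$ be a partition of $\{1,\dots,n\}$ into sets of size $b$. Put $g_{\tau_i}=\frac1b\sum_{j\in\tau_i}g_j$. For each $i$, let $h_{\tau_i}(\boldsymbol{x})\in\partial g_{\tau_i}(\boldsymbol{x})$ be a subgradient selection with $\sup_{\boldsymbol{x}\in W}\|h_{\tau_i}(\boldsymbol{x})\|_2\le G_{\tau_i}$, where $G_{\tau_i}>0$. Set $$\overline{G}_\tau=\frac1d\sum_{i=1}^d G_{\tau_i},\qquad p(\tau_i)=\frac{G_{\tau_i}}{\sum_{j=1}^d G_{\tau_j}}.$$ Fix $\boldsymbol{x}_1\in W$ and run $$\boldsymbol{x}_{k+1}=\Pi_W\Big(\boldsymbol{x}_k-\frac{1}{\mu k}\cdot\frac{1}{d\,p(\tau_{i_k})}h_{\tau_{i_k}}(\boldsymbol{x}_k)\Big),$$ with batches drawn i.i.d. from $p$. For $\alpha\in(0,1)$, let $\bar{\boldsymbol{x}}_k^\alpha$ be the average of the last $\lceil\alpha k\rceil$ iterates $\boldsymbol{x}_{k-\lceil\alpha k\rceil+1},\dots,\boldsymbol{x}_k$,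 and set $m_\alpha=1+\log\frac1{\min(\alpha,1-\alpha)}$. Then there is an absolute constant $C$ such that for every $\varepsilon>0$ and every $$k\ge\frac{C(\overline{G}_\tau)^2m_\alpha}{\mu\varepsilon}$$ one has $\mathbb{E}^{(p)}[F(\bar{\boldsymbol{x}}_k^\alpha)-F(\boldsymbol{x}_* )]\le\varepsilon$.
   Context: $\mathbb{E}^{(p)}$ denotes expectation over the batch indices drawn i.i.d. from $p$. $\partial g$ denotes the convex subdifferential. *)

From Stdlib Require Import Reals.
From mathcomp Require Import all_boot.
Set Implicit Arguments. Unset Strict Implicit. Unset Printing Implicit Defensive.
Local Open Scope R_scope.

Definition vec (m : nat) := 'I_m -> R.
Definition vzero m : vec m := fun _ => 0.
Definition vadd m (x y : vec m) : vec m := fun i => x i + y i.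
Definition vsub m (x y : vec m) : vec m := fun i => x i - y i.
Definition vscal m (a : R) (x : vec m) : vec m := fun i => a * x i.
Definition sumO (n : nat) (f : 'I_n -> R) : R := \big[Rplus/0]_(i < n) f i.
Definition dot m (x y : vec m) : R := sumO (fun i => x i * y i).
Definition vnorm m (x : vec m) : R := sqrt (dot x x).

Definition convex_Rm m (W : vec m -> Prop) : Prop :=
  forall x y t, W x -> W y -> 0 <= t <= 1 -> W (vadd (vscal t x) (vscal (1 - t) y)).
Definition closed_Rm m (W : vec m -> Prop) : Prop :=
  forall x, (forall eps, 0 < eps -> exists y, W y /\ vnorm (vsub x y) < eps) -> W x.
Definition convex_fun m (f : vec m -> R) : Prop :=
  forall x y t, 0 <= t <= 1 ->
    f (vadd (vscal t x) (vscal (1 - t) y)) <= t * f x + (1 - t) * f y.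
Definition strongly_convex_on m (mu : R) (W : vec m -> Prop) (f : vec m -> R) : Prop :=
  forall x y t, W x -> W y -> 0 <= t <= 1 ->
    f (vadd (vscal t x) (vscal (1 - t) y))
      <= t * f x + (1 - t) * f y - mu / 2 * t * (1 - t) * (vnorm (vsub x y)) ^ 2.
Definition is_proj m (W : vec m -> Prop) (Pi : vec m -> vec m) : Prop :=
  forall y, W (Pi y) /\ (forall z, W z -> vnorm (vsub y (Pi y)) <= vnorm (vsub y z)).
Definition is_subgradient m (f : vec m -> R) (x h : vec m) : Prop :=
  forall y, f x + dot h (vsub y x) <= f y.

Definition avgF m n (g : 'I_n -> vec m -> R) (x : vec m) : R :=
  / INR n * \big[Rplus/0]_(j < n) g j x.
Definition batch_fun m n (S : {set 'I_n}) (b : nat) (g : 'I_n -> vec m -> R)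
  (x : vec m) : R := / INR b * \big[Rplus/0]_(j in S) g j x.

Definition Gbar d (G : 'I_d -> R) : R := / INR d * sumO G.
Definition prob d (G : 'I_d -> R) (i : 'I_d) : R := G i / sumO G.

Definition ceil_nat (x : R) : nat := Z.to_nat (- Int_part (- x)).
Definition m_alpha (alpha : R) : R := 1 + ln (/ Rmin alpha (1 - alpha)).

Definition sgd_step m d (Pi : vec m -> vec m) (mu : R) (h : 'I_d -> vec m -> vec m)
  (G : 'I_d -> R) (k : nat) (i : 'I_d) (x : vec m) : vec m :=
  Pi (vsub x (vscal (/ (mu * INR k) * / (INR d * prob G i)) (h i x))).

(* sgd_run .. k x [:: i_k; ...; i_{k+N-1}] = [:: x_k; ...; x_{k+N}] with x_k = x *)
Fixpoint sgd_run m d (Pi : vec m -> vec m) (mu : R) (h : 'I_d -> vec m -> vec m)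
  (G : 'I_d -> R) (k : nat) (x : vec m) (l : seq 'I_d) : seq (vec m) :=
  match l with
  | [::] => [:: x]
  | i :: l' => x :: sgd_run Pi mu h G k.+1 (sgd_step Pi mu h G k i x) l'
  end.

Definition tail_avg m (L : nat) (xs : seq (vec m)) : vec m :=
  vscal (/ INR L) (foldr (fun u v : vec m => vadd u v) (fun _ : 'I_m => 0) (drop (size xs - L)%N xs)).

(* expectation of f over N i.i.d. indices drawn from p:
   f is applied to [:: i_1; ...; i_N] *)
Fixpoint expectN d (p : 'I_d -> R) (N : nat) (f : seq 'I_d -> R) : R :=
  match N with
  | O => f [::]
  | S N' => \big[Rplus/0]_(i < d) (p i * expectN p N' (fun l => f (i :: l)))
  end.

(* Because batches are drawn with probability proportional to G_tau, the
   reweighted subgradient has second moment Gbar^2, so one projected step satisfies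
     E|x' - z|^2 <= |x - z|^2 - 2/(mu k) (F x - F z + mu/2 |x - z|^2) + Gbar^2 / (mu k)^2
   for every z in W.  Summing this along the run bounds the expected regret of any stretch
   of iterates against any point by harmonic sums; with z = x_* it gives
   E|x_k - x_*|^2 <= 4 Gbar^2 / (mu^2 k).  Taking z to be the first iterate of a
   suffix yields a recurrence for the suffix sums S_j, the expected sum of F x_t - F x_* over
   the last j of T iterates, as in the analysis of suffix averaging by Shamir and Zhang; it telescopes
   from j = ceil(alpha T) up to about T / 2, where the distance bound takes over.  The harmonic
   sums over these ranges contribute the log (1 / min(alpha, 1 - alpha)), and Jensen's
   inequality passes from S_j / j to the averaged iterate. *)

From HB Require Import structures.
From Stdlib Require Import Reals Lra Lia ZArith FunctionalExtensionality.
From mathcomp Require Import all_boot zify.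
Set Implicit Arguments. Unset Strict Implicit. Unset Printing Implicit Defensive.
Local Open Scope R_scope.

(** * Sums, vectors and projections *)

HB.instance Definition _ := Monoid.isComLaw.Build R 0 Rplus
  (fun a b c => esym (Rplus_assoc a b c)) Rplus_comm Rplus_0_l.
HB.instance Definition _ := Monoid.isMulLaw.Build R 0 Rmult Rmult_0_l Rmult_0_r.
HB.instance Definition _ := Monoid.isAddLaw.Build R Rmult Rplus
  Rmult_plus_distr_r Rmult_plus_distr_l.

Lemma ler_sumR (I : Type) (r : seq I) (P : pred I) (F1 F2 : I -> R) :
  (forall i, P i -> F1 i <= F2 i) ->
  \big[Rplus/0]_(i <- r | P i) F1 i <= \big[Rplus/0]_(i <- r | P i) F2 i.
Proof. by move=> le12; apply: (big_ind2 Rle) => [|*|]; [lra|lra|]. Qed.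

Lemma sumR_ge0 (I : Type) (r : seq I) (P : pred I) (F : I -> R) :
  (forall i, P i -> 0 <= F i) -> 0 <= \big[Rplus/0]_(i <- r | P i) F i.
Proof. by move=> F_ge0; apply: (big_ind (Rle 0)) => [|*|]; [lra|lra|]. Qed.

Lemma sumR_const_ord n a : \big[Rplus/0]_(i < n) a = INR n * a.
Proof. by elim: n => [|n IH]; rewrite ?big_ord0 ?big_ord_recr ?IH ?S_INR /=; ring. Qed.

Lemma sumR_const_seq (I : Type) (r : seq I) a : \big[Rplus/0]_(i <- r) a = INR (size r) * a.
Proof.
elim: r => [|i r IH]; first by rewrite big_nil /=; ring.
by rewrite big_cons IH (S_INR (size r)); ring.
Qed.

Lemma sumRB_const (I : Type) (r : seq I) (f : I -> R) a :
  \big[Rplus/0]_(i <- r) (f i - a) = \big[Rplus/0]_(i <- r) f i - INR (size r) * a.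
Proof.
have -> : INR (size r) * a = - \big[Rplus/0]_(i <- r) (- a) by rewrite sumR_const_seq; ring.
by rewrite /Rminus Ropp_involutive -big_split.
Qed.

Lemma INR_gt0 n : (0 < n)%N -> 0 < INR n.
Proof. by move=> n_gt0; apply/lt_0_INR/ltP. Qed.

Lemma le_INR_double a b : (a <= 2 * b)%N -> INR a <= 2 * INR b.
Proof. by move/leP/le_INR; rewrite mult_INR /=; lra. Qed.

Lemma le0_of_le_vanishing a b : (forall s, 0 < s <= 1 -> a <= s * b) -> a <= 0.
Proof.
move=> H; case: (Rle_lt_dec a 0) => // a_gt0.
have b_le := Rle_abs b; have b_ge0 := Rabs_pos b.
set s := a / (Rabs b + a + 1).
have s_a : s * (Rabs b + a + 1) = a by rewrite /s; field; lra.
have s_gt0 : 0 < s by apply: Rdiv_lt_0_compat; lra.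
have : a <= s * b by apply: H; split => //; nra.
nra.
Qed.

Lemma ln_le x y : 0 < x -> x <= y -> ln x <= ln y.
Proof.
move=> x_gt0 /Rle_lt_or_eq_dec [lt_xy|->]; last exact: Rle_refl.
exact/Rlt_le/ln_increasing.
Qed.

Definition sqnorm m (x : vec m) := dot x x.

Lemma vec_ext m (x y : vec m) : (forall i, x i = y i) -> x = y.
Proof. exact: functional_extensionality. Qed.

Section Dot.
Variable m : nat.
Implicit Types (x y z : vec m) (a : R).

Lemma dotC x y : dot x y = dot y x.
Proof. by apply: eq_bigr => i _; ring. Qed.

Lemma dotDl x y z : dot (vadd x y) z = dot x z + dot y z.
Proof. by rewrite /dot /sumO -big_split; apply: eq_bigr => i _ /=; rewrite /vadd; ring. Qed.

Lemma dotZl a x z : dot (vscal a x) z = a * dot x z.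
Proof. by rewrite /dot /sumO big_distrr; apply: eq_bigr => i _ /=; rewrite /vscal; ring. Qed.

Lemma dotBl x y z : dot (vsub x y) z = dot x z - dot y z.
Proof.
have -> : vsub x y = vadd x (vscal (-1) y) by apply: vec_ext => i; rewrite /vsub /vadd /vscal; ring.
by rewrite dotDl dotZl; ring.
Qed.

Lemma dotBr x y z : dot z (vsub x y) = dot z x - dot z y.
Proof. by rewrite dotC dotBl !(dotC z). Qed.

Lemma dotZr a x z : dot z (vscal a x) = a * dot z x.
Proof. by rewrite dotC dotZl dotC. Qed.

Lemma sqnorm_ge0 x : 0 <= sqnorm x.
Proof. by apply: sumR_ge0 => i _; nra. Qed.

Lemma vnorm_sqr x : vnorm x ^ 2 = sqnorm x.
Proof. by rewrite /vnorm pow2_sqrt //; apply: sqnorm_ge0. Qed.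

Lemma sqnormB x y : sqnorm (vsub x y) = sqnorm x - 2 * dot x y + sqnorm y.
Proof. by rewrite /sqnorm dotBl !dotBr (dotC y x); ring. Qed.

Lemma sqnormBC x y : sqnorm (vsub x y) = sqnorm (vsub y x).
Proof. by apply: eq_bigr => i _; rewrite /vsub; ring. Qed.

Lemma sqnorm_le_sqr x a : vnorm x <= a -> sqnorm x <= a ^ 2.
Proof. by move=> le_xa; rewrite -vnorm_sqr; apply: pow_incr; split => //; apply: sqrt_pos. Qed.

End Dot.

Definition vmean m d (u : 'I_d -> vec m) : vec m :=
  fun c => / INR d * \big[Rplus/0]_(i < d) u i c.

Lemma dot_vmeanl m d (u : 'I_d -> vec m) (z : vec m) :
  dot (vmean u) z = / INR d * \big[Rplus/0]_(i < d) dot (u i) z.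
Proof.
rewrite /dot /sumO /vmean.
transitivity (\big[Rplus/0]_(c < m) \big[Rplus/0]_(i < d) (/ INR d * (u i c * z c))).
  by apply: eq_bigr => c _; rewrite big_distrr big_distrl; apply: eq_bigr => i _ /=; ring.
by rewrite exchange_big big_distrr; apply: eq_bigr => i _; rewrite big_distrr.
Qed.

Lemma proj_variational_ineq m (W : vec m -> Prop) (Pi : vec m -> vec m) y z :
  convex_Rm W -> is_proj W Pi -> W z -> dot (vsub y (Pi y)) (vsub z (Pi y)) <= 0.
Proof.
move=> W_convex Pi_proj Wz; have [WPy Pi_min] := Pi_proj y.
set u := vsub y (Pi y); set v := vsub z (Pi y).
suff : 2 * dot u v <= 0 by lra.
apply: (@le0_of_le_vanishing _ (sqnorm v)) => s s01.
have Wys := W_convex z (Pi y) s Wz WPy ltac:(lra).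
have /sqnorm_le_sqr := Pi_min _ Wys; rewrite vnorm_sqr.
have -> : vsub y (vadd (vscal s z) (vscal (1 - s) (Pi y))) = vsub u (vscal s v).
  by apply: vec_ext => i; rewrite /u /v /vsub /vadd /vscal; ring.
rewrite -/u (sqnormB u) /sqnorm !dotZr dotZl => le_u.
have : 0 <= s * (s * dot v v - 2 * dot u v) by lra.
nra.
Qed.

Lemma proj_sqdist_le m (W : vec m -> Prop) (Pi : vec m -> vec m) y z :
  convex_Rm W -> is_proj W Pi -> W z -> sqnorm (vsub (Pi y) z) <= sqnorm (vsub y z).
Proof.
move=> W_convex Pi_proj Wz.
have obtuse := proj_variational_ineq y W_convex Pi_proj Wz.
set u := vsub y (Pi y) in obtuse; set v := vsub z (Pi y) in obtuse.
have -> : vsub y z = vsub u v by apply: vec_ext => i; rewrite /u /v /vsub; ring.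
have -> : vsub (Pi y) z = vscal (-1) v by apply: vec_ext => i; rewrite /v /vsub /vscal; ring.
rewrite sqnormB /sqnorm dotZl dotZr.
have := sqnorm_ge0 u; rewrite /sqnorm; nra.
Qed.

Definition vsum m (ys : seq (vec m)) : vec m :=
  foldr (fun u v : vec m => vadd u v) (fun _ : 'I_m => 0) ys.

Lemma convex_fun_mean m (F : vec m -> R) (ys : seq (vec m)) : convex_fun F ->
  (0 < size ys)%N ->
  F (vscal (/ INR (size ys)) (vsum ys)) <= / INR (size ys) * \big[Rplus/0]_(u <- ys) F u.
Proof.
move=> F_convex; elim: ys => // u [|v ys] IH _.
  have -> : vscal (/ INR 1) (vsum [:: u]) = u.
    by apply: vec_ext => i; rewrite /vscal /vsum /vadd /= Rinv_1; ring.
  by rewrite big_cons big_nil /= Rinv_1; lra.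
move: IH; set ys' := v :: ys; set n := INR (size ys') => /(_ isT) IH.
have n_gt0 : 0 < n by apply: lt_0_INR; rewrite /ys' /=; lia.
have -> : INR (size (u :: ys')) = n + 1 by rewrite /n -S_INR.
set t := / (n + 1).
have t01 : 0 <= t <= 1.
  split; first by apply/Rlt_le/Rinv_0_lt_compat; lra.
  by rewrite -Rinv_1; apply: Rinv_le_contravar; lra.
have -> : vscal t (vsum (u :: ys')) = vadd (vscal t u) (vscal (1 - t) (vscal (/ n) (vsum ys'))).
  by apply: vec_ext => i; rewrite /vscal /vsum /vadd /t /=; field; lra.
apply: Rle_trans (F_convex _ _ _ t01) _.
have -> : 1 - t = t * n by rewrite /t; field; lra.
rewrite big_cons.
have tn_ge0 : 0 <= t * n by nra.
have := Rmult_le_compat_l _ _ _ tn_ge0 IH.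
have -> : t * n * (/ n * \big[Rplus/0]_(j <- ys') F j) = t * \big[Rplus/0]_(j <- ys') F j.
  by field; lra.
lra.
Qed.

Section StronglyConvex.
Variables (m : nat) (mu : R) (W : vec m -> Prop) (F : vec m -> R).
Hypothesis F_sc : strongly_convex_on mu W F.

Lemma strongly_convex_subgradient x z u : W x -> W z -> is_subgradient F x u ->
  F x - F z + mu / 2 * sqnorm (vsub x z) <= dot u (vsub x z).
Proof.
move=> Wx Wz u_sub.
have -> : dot u (vsub x z) = - dot u (vsub z x) by rewrite !dotBr; ring.
rewrite sqnormBC; set S := sqnorm (vsub z x).
suff : dot u (vsub z x) - (F z - F x - mu / 2 * S) <= 0 by lra.
apply: (@le0_of_le_vanishing _ (mu / 2 * S)) => t t01.
have := F_sc (t:=t) Wz Wx ltac:(lra); rewrite vnorm_sqr -/S.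
have := u_sub (vadd (vscal t z) (vscal (1 - t) x)).
have -> : vsub (vadd (vscal t z) (vscal (1 - t) x)) x = vscal t (vsub z x).
  by apply: vec_ext => i; rewrite /vsub /vadd /vscal; ring.
rewrite dotZr => le_sub le_sc.
have : t * dot u (vsub z x) <= t * (F z - F x - mu / 2 * S + t * (mu / 2 * S)) by nra.
move=> /(Rmult_le_reg_l _ _ _ (proj1 t01)); lra.
Qed.

Lemma strongly_convex_quadratic_growth xs x : convex_Rm W -> W xs ->
  (forall y, W y -> F xs <= F y) -> W x -> mu / 2 * sqnorm (vsub x xs) <= F x - F xs.
Proof.
move=> W_convex Wxs xs_min Wx; set S := sqnorm (vsub x xs).
suff : mu / 2 * S - (F x - F xs) <= 0 by lra.
apply: (@le0_of_le_vanishing _ (mu / 2 * S)) => t t01.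
have := F_sc (t:=t) Wx Wxs ltac:(lra); rewrite vnorm_sqr -/S.
have := xs_min _ (W_convex x xs t Wx Wxs ltac:(lra)) => le_min le_sc.
have : t * (mu / 2 * S - (F x - F xs)) <= t * (t * (mu / 2 * S)) by nra.
exact: Rmult_le_reg_l _ _ _ (proj1 t01).
Qed.

End StronglyConvex.

(** * Expectation over i.i.d. batch sequences *)

Section Expectation.
Variables (d : nat) (p : 'I_d -> R).
Hypothesis p_sum1 : \big[Rplus/0]_(i < d) p i = 1.
Hypothesis p_ge0 : forall i, 0 <= p i.

Lemma expectN_cst N a : expectN p N (fun _ => a) = a.
Proof.
elim: N => //= N IH; under eq_bigr do rewrite IH.
by rewrite -big_distrl /= p_sum1 Rmult_1_l.
Qed.

Lemma expectND N f g : expectN p N (fun l => f l + g l) = expectN p N f + expectN p N g.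
Proof.
elim: N f g => //= N IH f g.
by rewrite -big_split; apply: eq_bigr => i _ /=; rewrite IH; ring.
Qed.

Lemma expectNZ N a f : expectN p N (fun l => a * f l) = a * expectN p N f.
Proof.
elim: N f => //= N IH f.
by rewrite big_distrr; apply: eq_bigr => i _ /=; rewrite IH; ring.
Qed.

Lemma expectN_affine N a b f : expectN p N (fun l => a * f l + b) = a * expectN p N f + b.
Proof. by rewrite expectND expectNZ expectN_cst. Qed.

Lemma ler_expectN N f g : (forall l, size l = N -> f l <= g l) ->
  expectN p N f <= expectN p N g.
Proof.
elim: N f g => [|N IH] f g le_fg /=; first exact: le_fg.
apply: ler_sumR => i _; apply: Rmult_le_compat_l => //.
by apply: IH => l size_l; apply: le_fg; rewrite /= size_l.
Qed.

Lemma eq_expectN N f g : (forall l, size l = N -> f l = g l) ->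
  expectN p N f = expectN p N g.
Proof. by move=> eq_fg; apply: Rle_antisym; apply: ler_expectN => l /eq_fg ->; lra. Qed.

Lemma expectN_cat N1 N2 f : expectN p (N1 + N2) f =
  expectN p N1 (fun l1 => expectN p N2 (fun l2 => f (l1 ++ l2))).
Proof. by elim: N1 f => //= N1 IH f; apply: eq_bigr => j _; rewrite IH. Qed.

Lemma expectN_rcons N f : expectN p N.+1 f =
  expectN p N (fun l => \big[Rplus/0]_(i < d) (p i * f (l ++ [:: i]))).
Proof. by rewrite -addn1 expectN_cat. Qed.

End Expectation.
(** * Harmonic sums and suffix averages *)

Definition harm (a n : nat) : R := \big[Rplus/0]_(i < n) / INR (a + i).

Lemma harm_recl a n : harm a n.+1 = / INR a + harm a.+1 n.
Proof.
rewrite /harm big_ord_recl addn0; congr (_ + _).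
by apply: eq_bigr => i _; rewrite lift0 addSnnS.
Qed.

Lemma harm_recr a n : harm a n.+1 = harm a n + / INR (a + n).
Proof. by rewrite /harm big_ord_recr. Qed.

Lemma harm_le_div a n : (0 < a)%N -> harm a n <= INR n / INR a.
Proof.
move=> a_gt0; have a_gt0R := INR_gt0 a_gt0.
rewrite /Rdiv -sumR_const_ord; apply: ler_sumR => i _.
by apply: Rinv_le_contravar => //; apply/le_INR/leP/leq_addr.
Qed.

Lemma inv_le_ln_diff x : 1 <= x -> / (x + 1) <= ln (x + 1) - ln x.
Proof.
move=> x_ge1.
have := exp_ineq1_le (- / (x + 1)).
have -> : 1 + - / (x + 1) = x / (x + 1) by field; lra.
have x_pos : 0 < x / (x + 1) by apply: Rdiv_lt_0_compat; lra.
move=> /(ln_le x_pos); rewrite ln_exp /Rdiv ln_mult; try lra.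
  by rewrite ln_Rinv; lra.
by apply: Rinv_0_lt_compat; lra.
Qed.

Lemma harm_le_ln a n : (0 < a)%N -> harm a n.+1 <= 1 + ln (INR (a + n) / INR a).
Proof.
move=> a_gt0; have a_gt0R := INR_gt0 a_gt0.
have inv_a_le1 : / INR a <= 1.
  by rewrite -Rinv_1; apply: Rinv_le_contravar; [lra | apply: (le_INR 1); apply/leP].
suff : harm a n.+1 <= / INR a + ln (INR (a + n) / INR a) by lra.
elim: n => [|n IH].
  by rewrite /harm big_ord_recr big_ord0 addn0 /Rdiv Rinv_r ?ln_1 /=; lra.
have a_n_ge1 : 1 <= INR (a + n) by apply: (le_INR 1); apply/leP; lia.
have := inv_le_ln_diff a_n_ge1; rewrite -S_INR harm_recr addnS.
have : 0 < INR (a + n).+1 by apply: lt_0_INR; lia.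
have : 0 < / INR a by apply: Rinv_0_lt_compat.
move=> ? ? ?; rewrite /Rdiv !ln_mult in IH *; lra.
Qed.

Lemma harm_le_m_alpha alpha a n : 0 < alpha < 1 -> (0 < a)%N ->
  INR (a + n) * Rmin alpha (1 - alpha) <= INR a -> harm a n.+1 <= m_alpha alpha.
Proof.
move=> alpha01 a_gt0 le_an; have a_gt0R := INR_gt0 a_gt0.
have mn_gt0 : 0 < Rmin alpha (1 - alpha) by apply: Rmin_glb_lt; lra.
apply: Rle_trans (harm_le_ln n a_gt0) _; rewrite /m_alpha.
apply/Rplus_le_compat_l/ln_le.
  by apply: Rdiv_lt_0_compat => //; apply: INR_gt0; lia.
apply: (Rmult_le_reg_r (INR a * Rmin alpha (1 - alpha))); first nra.
by rewrite /Rdiv; field_simplify; lra.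
Qed.

Lemma m_alpha_ge1 alpha : 0 < alpha < 1 -> 1 <= m_alpha alpha.
Proof.
move=> alpha01; have mn_gt0 : 0 < Rmin alpha (1 - alpha) by apply: Rmin_glb_lt; lra.
suff : ln 1 <= ln (/ Rmin alpha (1 - alpha)) by rewrite /m_alpha ln_1 => ?; lra.
apply: ln_le; first lra.
by rewrite -[X in X <= _]Rinv_1; apply: Rinv_le_contravar => //; have := Rmin_l alpha (1 - alpha); lra.
Qed.

(* In section [SGD], [sig j] is the expected total suboptimality of the last [j] of [T]
   iterates, and the two hypotheses are the estimates proved for it there. *)
Section SuffixSums.
Variables (sig : nat -> R) (c : R) (T : nat).
Hypothesis c_gt0 : 0 < c.
Hypothesis sig_rec : forall k, (1 <= k)%N -> (k < T)%N ->
  INR k.+1 * sig k <= INR k * sig k.+1 + c * harm (T - k) k.+1.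
Hypothesis sig_base : forall J, (1 <= J <= T)%N -> sig J <= 4 * c + c * harm (T - J).+1 J.

Lemma suffix_mean_step k : (1 <= k)%N -> (k < T)%N ->
  sig k / INR k <= sig k.+1 / INR k.+1 + c / (INR k * INR (T - k)).
Proof.
move=> k_ge1 k_lt_T.
have k_gt0 := INR_gt0 k_ge1.
have Tk_gt0 : 0 < INR (T - k) by apply: INR_gt0; lia.
have := sig_rec k_ge1 k_lt_T; have := @harm_le_div (T - k) k.+1 ltac:(lia).
rewrite S_INR => harm_le rec.
have : c * harm (T - k) k.+1 <= c * ((INR k + 1) / INR (T - k)) by apply: Rmult_le_compat_l; lra.
move=> {}harm_le.
apply: (Rmult_le_reg_r (INR k * (INR k + 1))); first nra.
have -> : (sig k.+1 / (INR k + 1) + c / (INR k * INR (T - k))) * (INR k * (INR k + 1)) =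
  INR k * sig k.+1 + c * ((INR k + 1) / INR (T - k)) by field; lra.
have -> : sig k / INR k * (INR k * (INR k + 1)) = (INR k + 1) * sig k by field; lra.
lra.
Qed.

Lemma suffix_mean_telescope L J : (1 <= L <= J)%N -> (2 * J <= T.+1)%N ->
  sig L / INR L <= sig J / INR J + 2 * c / INR T * harm L (J - L).
Proof.
move=> /andP[L_ge1 L_le_J] JT.
suff telescope n : (L + n <= J)%N ->
    sig L / INR L <= sig (L + n) / INR (L + n) + 2 * c / INR T * harm L n.
  by have := telescope (J - L)%N; rewrite subnKC //; apply; lia.
elim: n => [|n IH] LnJ; first by rewrite addn0 /harm big_ord0; lra.
have := IH ltac:(lia); have := @suffix_mean_step (L + n) ltac:(lia) ltac:(lia).
have Ln_gt0 : 0 < INR (L + n) by apply: INR_gt0; lia.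
have TLn_gt0 : 0 < INR (T - (L + n)) by apply: INR_gt0; lia.
have T_le : INR T <= 2 * INR (T - (L + n)) by apply: le_INR_double; lia.
have T_gt0 : 0 < INR T by apply: INR_gt0; lia.
have : c / (INR (L + n) * INR (T - (L + n))) <= 2 * c / INR T * / INR (L + n).
  apply: (Rmult_le_reg_r (INR (L + n) * INR (T - (L + n)) * INR T)).
    by apply: Rmult_lt_0_compat => //; apply: Rmult_lt_0_compat.
  have -> : c / (INR (L + n) * INR (T - (L + n))) * (INR (L + n) * INR (T - (L + n)) * INR T) =
    c * INR T by field; lra.
  have -> : 2 * c / INR T * / INR (L + n) * (INR (L + n) * INR (T - (L + n)) * INR T) =
    2 * c * INR (T - (L + n)) by field; lra.
  nra.
rewrite harm_recr addnS; lra.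
Qed.

Lemma suffix_mean_half J : (1 <= J)%N -> (T <= 2 * J <= T.+1)%N ->
  sig J / INR J <= 10 * c / INR T.
Proof.
move=> J_ge1 /andP[TJ JT].
have J_gt0 := INR_gt0 J_ge1.
have TJ_gt0 : 0 < INR (T - J).+1 by apply: INR_gt0.
have T_le_2J : INR T <= 2 * INR J by apply: le_INR_double.
have T_le : INR T <= 2 * INR (T - J).+1 by apply: le_INR_double; lia.
have := sig_base (ltac:(lia) : (1 <= J <= T)%N).
have := @harm_le_div (T - J).+1 J (ltn0Sn _).
move=> harm_le base.
have : sig J <= 4 * c + c * (INR J / INR (T - J).+1).
  by have := Rmult_le_compat_l _ _ _ (Rlt_le _ _ c_gt0) harm_le; lra.
move=> {}base.
have T_gt0 : 0 < INR T by apply: INR_gt0; lia.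
apply: (Rmult_le_reg_r (INR J * INR T * INR (T - J).+1)).
  by apply: Rmult_lt_0_compat => //; apply: Rmult_lt_0_compat.
have -> : 10 * c / INR T * (INR J * INR T * INR (T - J).+1) = 10 * c * INR J * INR (T - J).+1.
  by field; lra.
have -> : sig J / INR J * (INR J * INR T * INR (T - J).+1) = sig J * (INR T * INR (T - J).+1).
  by field; lra.
apply: Rle_trans (Rmult_le_compat_r _ _ _ _ base) _; first nra.
have -> : (4 * c + c * (INR J / INR (T - J).+1)) * (INR T * INR (T - J).+1) =
  4 * c * INR T * INR (T - J).+1 + c * INR J * INR T by field; lra.
have : 4 * c * INR T * INR (T - J).+1 <= 4 * c * (2 * INR J) * INR (T - J).+1.
  by apply: Rmult_le_compat_r; [lra | apply: Rmult_le_compat_l; lra].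
have : c * INR J * INR T <= c * INR J * (2 * INR (T - J).+1) by apply: Rmult_le_compat_l; nra.
lra.
Qed.

Variables (alpha : R) (L : nat).
Hypotheses (alpha01 : 0 < alpha < 1) (L_range : (1 <= L <= T)%N).
Hypotheses (alpha_le_L : alpha * INR T <= INR L) (L_lt_alpha : INR L < alpha * INR T + 1).

Lemma suffix_mean_long : (T <= 2 * L)%N -> sig L / INR L <= 12 * c * m_alpha alpha / INR T.
Proof.
move=> TL; move: L_range => /andP[L_ge1 L_le_T].
have L_gt0 := INR_gt0 L_ge1.
have m_ge1 := m_alpha_ge1 alpha01.
have T_le_2L : INR T <= 2 * INR L by apply: le_INR_double.
have harm_le : harm (T - L).+1 L <= m_alpha alpha.
  have [n L_eq] : exists n, L = n.+1 by exists L.-1; lia.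
  rewrite L_eq; apply: harm_le_m_alpha => //; have -> : ((T - n.+1).+1 + n = T)%N by lia.
  rewrite S_INR minus_INR; last by apply/leP; lia.
  have := L_lt_alpha; rewrite L_eq S_INR.
  by have := Rmin_r alpha (1 - alpha); have := pos_INR T; nra.
have : sig L <= c * (4 + m_alpha alpha).
  have := sig_base (ltac:(lia) : (1 <= L <= T)%N).
  by have := Rmult_le_compat_l _ _ _ (Rlt_le _ _ c_gt0) harm_le; lra.
move=> sig_le.
have T_gt0 : 0 < INR T by apply: INR_gt0; lia.
apply: (Rmult_le_reg_r (INR L * INR T)); first nra.
have -> : sig L / INR L * (INR L * INR T) = sig L * INR T by field; lra.
have -> : 12 * c * m_alpha alpha / INR T * (INR L * INR T) = 12 * c * m_alpha alpha * INR L.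
  by field; lra.
have := Rmult_le_compat_r _ _ _ (Rlt_le _ _ T_gt0) sig_le.
have : c * (4 + m_alpha alpha) * INR T <= c * (4 + m_alpha alpha) * (2 * INR L).
  by apply: Rmult_le_compat_l => //; nra.
have : 0 <= c * INR L * (10 * m_alpha alpha - 8) by apply: Rmult_le_pos; nra.
lra.
Qed.

Lemma suffix_mean_short : (2 * L < T)%N -> sig L / INR L <= 12 * c * m_alpha alpha / INR T.
Proof.
move=> LT; move: L_range => /andP[L_ge1 L_le_T].
set J := (T - T %/ 2)%N.
have m_ge1 := m_alpha_ge1 alpha01.
have T_gt0 : 0 < INR T by apply: INR_gt0; lia.
have := suffix_mean_telescope (ltac:(lia) : (1 <= L <= J)%N) (ltac:(lia) : (2 * J <= T.+1)%N).
have := suffix_mean_half (ltac:(lia) : (1 <= J)%N) (ltac:(lia) : (T <= 2 * J <= T.+1)%N).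
have harm_le : harm L (J - L) <= m_alpha alpha.
  have -> : (J - L = (J - L - 1).+1)%N by lia.
  apply: harm_le_m_alpha => //; have -> : (L + (J - L - 1) = J - 1)%N by lia.
  have : (2 * (J - 1) <= T)%N by lia.
  move=> /leP/le_INR; rewrite mult_INR /= => J1_le.
  by have := Rmin_l alpha (1 - alpha); have := pos_INR (J - 1); nra.
have : 2 * c / INR T * harm L (J - L) <= 2 * c / INR T * m_alpha alpha.
  by apply: Rmult_le_compat_l => //; apply/Rlt_le/Rdiv_lt_0_compat; lra.
have -> : 12 * c * m_alpha alpha / INR T =
  10 * c / INR T + 2 * c / INR T * m_alpha alpha + 10 * c / INR T * (m_alpha alpha - 1).
  by field; lra.
have : 0 <= 10 * c / INR T * (m_alpha alpha - 1).
  by apply: Rmult_le_pos; [apply/Rlt_le/Rdiv_lt_0_compat|]; lra.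
lra.
Qed.

Lemma suffix_mean_bound : sig L / INR L <= 12 * c * m_alpha alpha / INR T.
Proof.
by case: (leqP T (2 * L)) => [/suffix_mean_long | /suffix_mean_short].
Qed.

End SuffixSums.

(** * Projected SGD with importance sampling *)

Section ImportanceSampling.
Variables (d : nat) (G : 'I_d -> R).
Hypotheses (d_gt0 : (0 < d)%N) (G_gt0 : forall i, 0 < G i).

Lemma sumO_gt0 : 0 < sumO G.
Proof.
rewrite /sumO; case: d d_gt0 G G_gt0 => // d' _ G' G'_gt0.
rewrite big_ord_recr /=; apply: Rplus_le_lt_0_compat => //.
by apply: sumR_ge0 => i _; apply: Rlt_le.
Qed.

Lemma prob_gt0 i : 0 < prob G i.
Proof. exact: Rdiv_lt_0_compat (G_gt0 i) sumO_gt0. Qed.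

Lemma prob_sum1 : \big[Rplus/0]_(i < d) prob G i = 1.
Proof. by rewrite /prob /Rdiv -big_distrl /= -/(sumO G) Rinv_r //; have := sumO_gt0; lra. Qed.

Lemma Gbar_gt0 : 0 < Gbar G.
Proof. by apply: Rmult_lt_0_compat; [apply/Rinv_0_lt_compat/INR_gt0 | apply: sumO_gt0]. Qed.

(* Sampling proportionally to [G] is what makes the second moment of the reweighted
   subgradients the squared mean [Gbar G ^ 2] rather than the mean of the [G i ^ 2]. *)
Lemma prob_second_moment :
  \big[Rplus/0]_(i < d) (prob G i * (G i / (INR d * prob G i)) ^ 2) = Gbar G ^ 2.
Proof.
have d_gt0R := INR_gt0 d_gt0; have S_gt0 := sumO_gt0.
transitivity (\big[Rplus/0]_(i < d) (G i * (sumO G / INR d ^ 2))).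
  by apply: eq_bigr => i _; rewrite /prob; have := G_gt0 i => ?; field; lra.
by rewrite -big_distrl /= -/(sumO G) /Gbar; field; lra.
Qed.

End ImportanceSampling.

Section SGD.
Variables (m d : nat) (W : vec m -> Prop) (Pi : vec m -> vec m) (F : vec m -> R)
  (mu : R) (xs : vec m) (h : 'I_d -> vec m -> vec m) (G : 'I_d -> R).
Hypotheses (d_gt0 : (0 < d)%N) (W_convex : convex_Rm W) (Pi_proj : is_proj W Pi).
Hypotheses (mu_gt0 : 0 < mu) (F_sc : strongly_convex_on mu W F).
Hypothesis h_sub : forall x, is_subgradient F x (vmean (h^~ x)).
Hypotheses (G_gt0 : forall i, 0 < G i) (h_le_G : forall i x, W x -> vnorm (h i x) <= G i).
Hypotheses (W_xs : W xs) (xs_min : forall x, W x -> F xs <= F x).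

Local Notation p := (prob G).
Local Notation Gb := (Gbar G).
Local Notation step := (sgd_step Pi mu h G).
Local Notation run := (sgd_run Pi mu h G).
Local Notation c := (Gb ^ 2 / (2 * mu)).

Let p_sum1 := prob_sum1 d_gt0 G_gt0.
Let p_ge0 i := Rlt_le _ _ (prob_gt0 d_gt0 G_gt0 i).

Lemma c_gt0 : 0 < c.
Proof. by apply: Rdiv_lt_0_compat; [have := Gbar_gt0 d_gt0 G_gt0; nra | lra]. Qed.

Lemma W_Pi y : W (Pi y).
Proof. by case: (Pi_proj y). Qed.

Lemma sgd_step_sqdist_le s i y z : W y -> W z ->
  let e := / (mu * INR s) * / (INR d * p i) in
  sqnorm (vsub (step s i y) z) <=
  sqnorm (vsub y z) - 2 * e * dot (h i y) (vsub y z) + (e * G i) ^ 2.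
Proof.
move=> Wy Wz e.
apply: Rle_trans (proj_sqdist_le _ W_convex Pi_proj Wz) _.
have -> : vsub (vsub y (vscal e (h i y))) z = vsub (vsub y z) (vscal e (h i y)).
  by apply: vec_ext => k; rewrite /vsub /vscal; ring.
rewrite sqnormB dotZr /sqnorm dotZl dotZr (dotC (vsub y z)).
have := sqnorm_le_sqr (h_le_G i Wy); rewrite /sqnorm => h_le.
have : e * (e * dot (h i y) (h i y)) <= e * (e * G i ^ 2) by nra.
lra.
Qed.

Lemma sgd_step_mean_sqdist s y z : (0 < s)%N -> W y -> W z ->
  \big[Rplus/0]_(i < d) (p i * sqnorm (vsub (step s i y) z)) <=
  sqnorm (vsub y z) - 2 / (mu * INR s) * (F y - F z + mu / 2 * sqnorm (vsub y z))
  + Gb ^ 2 / (mu ^ 2 * INR s ^ 2).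
Proof.
move=> s_gt0 Wy Wz.
have s_gt0R := INR_gt0 s_gt0; have d_gt0R := INR_gt0 d_gt0.
set eta := / (mu * INR s); set A := sqnorm (vsub y z).
apply: Rle_trans (_ : \big[Rplus/0]_(i < d) (p i * A
    + (-2 * eta * / INR d) * dot (h i y) (vsub y z)
    + eta ^ 2 * (p i * (G i / (INR d * p i)) ^ 2)) <= _).
  apply: ler_sumR => i _; have p_gt0 := prob_gt0 d_gt0 G_gt0 i.
  apply: Rle_trans (Rmult_le_compat_l _ _ _ (p_ge0 i) (sgd_step_sqdist_le s i Wy Wz)) _.
  by right; rewrite /eta /A; field; lra.
rewrite !big_split /= -!big_distrr -big_distrl /= p_sum1 prob_second_moment //.
have := strongly_convex_subgradient F_sc Wy Wz (h_sub y); rewrite dot_vmeanl.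
have -> : 2 / (mu * INR s) = 2 * eta by rewrite /eta; field; lra.
have -> : Gb ^ 2 / (mu ^ 2 * INR s ^ 2) = eta ^ 2 * Gb ^ 2 by rewrite /eta; field; lra.
have eta_gt0 : 0 < eta by apply: Rinv_0_lt_compat; nra.
rewrite -/A; set X := \big[Rplus/0]_(i < d) _ => /(Rmult_le_compat_l (2 * eta)) sub_ineq.
have -> : 1 * A + -2 * eta * / INR d * X + eta * (eta * 1) * Gb ^ 2 =
  A - 2 * eta * (/ INR d * X) + eta ^ 2 * Gb ^ 2 by ring.
have := sub_ineq ltac:(lra); lra.
Qed.

Lemma sgd_step_progress s y z : (0 < s)%N -> W y -> W z ->
  F y - F z + mu * INR s / 2 * \big[Rplus/0]_(i < d) (p i * sqnorm (vsub (step s i y) z))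
  <= mu / 2 * (INR s - 1) * sqnorm (vsub y z) + c * / INR s.
Proof.
move=> s_gt0 Wy Wz; have s_gt0R := INR_gt0 s_gt0.
have k_gt0 : 0 < mu * INR s / 2 by nra.
have := Rmult_le_compat_l _ _ _ (Rlt_le _ _ k_gt0) (sgd_step_mean_sqdist s_gt0 Wy Wz).
have -> : mu * INR s / 2 * (sqnorm (vsub y z)
    - 2 / (mu * INR s) * (F y - F z + mu / 2 * sqnorm (vsub y z))
    + Gb ^ 2 / (mu ^ 2 * INR s ^ 2)) =
  mu * INR s / 2 * sqnorm (vsub y z) - (F y - F z + mu / 2 * sqnorm (vsub y z))
  + c * / INR s by field; lra.
lra.
Qed.

Lemma expectN_sum_run N s y (f : vec m -> R) :
  expectN p N.+1 (fun l => \big[Rplus/0]_(u <- run s y l) f u) =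
  f y + \big[Rplus/0]_(i < d)
          (p i * expectN p N (fun l => \big[Rplus/0]_(u <- run s.+1 (step s i y) l) f u)).
Proof.
transitivity (\big[Rplus/0]_(i < d) (p i * (f y +
    expectN p N (fun l => \big[Rplus/0]_(u <- run s.+1 (step s i y) l) f u)))).
  rewrite /=; apply: eq_bigr => i _; congr (_ * _).
  rewrite -(expectN_cst p_sum1 N (f y)) -expectND.
  by apply: (eq_expectN p_ge0) => l _; rewrite big_cons.
under eq_bigr do rewrite Rmult_plus_distr_l.
by rewrite big_split -big_distrl /= p_sum1 Rmult_1_l.
Qed.

Lemma sgd_regret N s y z : (0 < s)%N -> W y -> W z ->
  expectN p N (fun l => \big[Rplus/0]_(u <- run s y l) (F u - F z)) <=
  mu / 2 * (INR s - 1) * sqnorm (vsub y z) + c * harm s N.+1.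
Proof.
elim: N s y => [|N IH] s y s_gt0 Wy Wz.
  have := sgd_step_progress s_gt0 Wy Wz.
  have : 0 <= mu * INR s / 2 * \big[Rplus/0]_(i < d) (p i * sqnorm (vsub (step s i y) z)).
    apply: Rmult_le_pos; first by have := INR_gt0 s_gt0; nra.
    by apply: sumR_ge0 => i _; apply: Rmult_le_pos; [apply: p_ge0 | apply: sqnorm_ge0].
  by rewrite /= big_cons big_nil harm_recl /harm big_ord0; lra.
rewrite expectN_sum_run (harm_recl s N.+1).
apply: Rle_trans (_ : F y - F z + \big[Rplus/0]_(i < d) (p i * (c * harm s.+1 N.+1)
    + mu * INR s / 2 * (p i * sqnorm (vsub (step s i y) z))) <= _).
  apply/Rplus_le_compat_l/ler_sumR => i _.
  have := IH s.+1 (step s i y) (ltn0Sn s) (W_Pi _) Wz; rewrite S_INR => IH_i.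
  apply: Rle_trans (Rmult_le_compat_l _ _ _ (p_ge0 i) IH_i) _.
  by right; field; lra.
rewrite big_split -big_distrl -big_distrr /= p_sum1 Rmult_1_l.
have := sgd_step_progress s_gt0 Wy Wz.
set E := \big[Rplus/0]_(i < d) (p i * _); lra.
Qed.

Fixpoint sgd_last s y (l : seq 'I_d) : vec m :=
  if l is i :: l' then sgd_last s.+1 (step s i y) l' else y.

Lemma W_sgd_last s y l : W y -> W (sgd_last s y l).
Proof. by elim: l s y => //= i l IH s y _; apply/IH/W_Pi. Qed.

Lemma sgd_last_rcons s y l i : sgd_last s y (l ++ [:: i]) = step (s + size l) i (sgd_last s y l).
Proof. by elim: l s y => [|j l IH] s y /=; rewrite ?addn0 // IH addSnnS. Qed.

Lemma drop_sgd_run s y l1 l2 :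
  drop (size l1) (run s y (l1 ++ l2)) = run (s + size l1) (sgd_last s y l1) l2.
Proof. by elim: l1 s y => [|j l IH] s y /=; rewrite ?addn0 ?drop0 // IH addSnnS. Qed.

Lemma size_sgd_run s y l : size (run s y l) = (size l).+1.
Proof. by elim: l s y => //= i l IH s y; rewrite IH. Qed.

Variable x1 : vec m.
Hypotheses (W_x1 : W x1) (F_convex : convex_fun F).

Definition expect_iter n (phi : vec m -> R) := expectN p n (fun l => phi (sgd_last 1 x1 l)).

Lemma expect_iterS n phi : expect_iter n.+1 phi =
  expect_iter n (fun y => \big[Rplus/0]_(i < d) (p i * phi (step n.+1 i y))).
Proof.
rewrite /expect_iter expectN_rcons; apply: (eq_expectN p_ge0) => l size_l.
by apply: eq_bigr => i _; rewrite sgd_last_rcons size_l add1n.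
Qed.

Lemma ler_expect_iter n phi psi : (forall y, W y -> phi y <= psi y) ->
  expect_iter n phi <= expect_iter n psi.
Proof. by move=> le_phi; apply: (ler_expectN p_ge0) => l _; apply/le_phi/W_sgd_last. Qed.

Lemma expect_iterD n phi psi :
  expect_iter n (fun y => phi y + psi y) = expect_iter n phi + expect_iter n psi.
Proof. exact: expectND. Qed.

Lemma expect_iter_affine n a b phi :
  expect_iter n (fun y => a * phi y + b) = a * expect_iter n phi + b.
Proof. exact: expectN_affine. Qed.

Lemma sgd_step_mean_sqdist_min s y : (0 < s)%N -> W y ->
  \big[Rplus/0]_(i < d) (p i * sqnorm (vsub (step s i y) xs)) <=
  (1 - 2 / INR s) * sqnorm (vsub y xs) + Gb ^ 2 / mu ^ 2 * (/ INR s) ^ 2.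
Proof.
move=> s_gt0 Wy; have s_gt0R := INR_gt0 s_gt0.
have := sgd_step_mean_sqdist s_gt0 Wy W_xs.
have := strongly_convex_quadratic_growth F_sc W_convex W_xs xs_min Wy.
set A := sqnorm (vsub y xs) => growth.
have k_gt0 : 0 < 2 / (mu * INR s) by apply: Rdiv_lt_0_compat; nra.
have := Rmult_le_compat_l _ _ _ (Rlt_le _ _ k_gt0) growth.
have -> : 2 / (mu * INR s) * (mu / 2 * A) = / INR s * A by field; lra.
have -> : Gb ^ 2 / (mu ^ 2 * INR s ^ 2) = Gb ^ 2 / mu ^ 2 * (/ INR s) ^ 2 by field; lra.
have -> : 2 / INR s = 2 * / INR s by [].
have -> : 2 / (mu * INR s) * (F y - F xs + mu / 2 * A) =
  2 / (mu * INR s) * (F y - F xs) + / INR s * A by field; lra.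
lra.
Qed.

Lemma expect_iter_sqdist n : (0 < n)%N ->
  expect_iter n (fun y => sqnorm (vsub y xs)) <= 4 * (Gb ^ 2 / mu ^ 2) / INR n.+1.
Proof.
have K_ge0 : 0 <= Gb ^ 2 / mu ^ 2 by apply: Rmult_le_pos; [nra | apply/Rlt_le/Rinv_0_lt_compat; nra].
set K := Gb ^ 2 / mu ^ 2 in K_ge0 *.
elim: n => // n IH _; rewrite expect_iterS.
case: n IH => [|n] IH.
  apply: Rle_trans (sgd_step_mean_sqdist_min (ltn0Sn 0) W_x1) _.
  have -> : INR 2 = 2 by rewrite S_INR INR_1; lra.
  by have := sqnorm_ge0 (vsub x1 xs); rewrite /K in K_ge0 *; rewrite INR_1 Rinv_1; lra.
apply: Rle_trans (ler_expect_iter _ (fun y Wy => sgd_step_mean_sqdist_min (ltn0Sn n.+1) Wy)) _.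
rewrite expect_iter_affine -/K.
have := IH (ltn0Sn n); set D := expect_iter n.+1 _; set t := INR n.+2 => IH'.
have t_ge2 : 2 <= t by rewrite /t !S_INR; have := pos_INR n; lra.
have c_ge0 : 0 <= 1 - 2 / t.
  have -> : 1 - 2 / t = (t - 2) / t by field; lra.
  by apply: Rmult_le_pos; [lra | apply/Rlt_le/Rinv_0_lt_compat; lra].
have -> : INR n.+3 = t + 1 by rewrite /t (S_INR n.+2).
apply: Rle_trans (_ : (1 - 2 / t) * (4 * K / t) + K * (/ t) ^ 2 <= _).
  by have := Rmult_le_compat_l _ _ _ c_ge0 IH'; lra.
have gap : 4 * K / (t + 1) - ((1 - 2 / t) * (4 * K / t) + K * (/ t) ^ 2) =
  K * (3 * t + 7) / (t ^ 2 * (t + 1)) by field; lra.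
have : 0 <= K * (3 * t + 7) / (t ^ 2 * (t + 1)).
  by apply: Rmult_le_pos; [apply: Rmult_le_pos; lra | apply/Rlt_le/Rinv_0_lt_compat; nra].
lra.
Qed.

Definition regret_from j s y :=
  expectN p j.-1 (fun l => \big[Rplus/0]_(u <- run s y l) (F u - F xs)).

(* [suffix_regret T j] is the expected total suboptimality of the last [j] of the
   iterates [x_1, ..., x_T], and [suboptimality T j] that of [x_(T-j+1)] alone. *)
Definition suffix_regret T j := expect_iter (T - j) (regret_from j (T - j).+1).
Definition suboptimality T j := expect_iter (T - j) (fun y => F y - F xs).

Lemma suffix_regretS T j : (2 <= j <= T)%N ->
  suffix_regret T j = suboptimality T j + suffix_regret T j.-1.
Proof.
case: j => [|[|j]] // /andP[_ le_jT].
rewrite /suffix_regret /suboptimality.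
have -> : regret_from j.+2 (T - j.+2).+1 = fun y => (F y - F xs) +
    \big[Rplus/0]_(i < d) (p i * regret_from j.+1 (T - j.+2).+2 (step (T - j.+2).+1 i y)).
  by apply: functional_extensionality => y; rewrite /regret_from expectN_sum_run.
by rewrite expect_iterD -expect_iterS (_ : (T - j.+1 = (T - j.+2).+1)%N) //; lia.
Qed.

Lemma suffix_regret_le T j : (1 <= j <= T)%N ->
  suffix_regret T j <= INR j * suboptimality T j + c * harm (T - j).+1 j.
Proof.
move=> /andP[j_gt0 _].
rewrite /suffix_regret /suboptimality -expect_iter_affine; apply: ler_expect_iter => y Wy.
rewrite /regret_from.
have -> : expectN p j.-1 (fun l => \big[Rplus/0]_(u <- run (T - j).+1 y l) (F u - F xs)) =
    expectN p j.-1 (fun l =>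
      INR j * (F y - F xs) + \big[Rplus/0]_(u <- run (T - j).+1 y l) (F u - F y)).
  apply: (eq_expectN p_ge0) => l size_l.
  by rewrite !sumRB_const size_sgd_run size_l (ltn_predK j_gt0); ring.
rewrite expectND expectN_cst //.
have := sgd_regret j.-1 (ltn0Sn (T - j)) Wy Wy; rewrite (ltn_predK j_gt0).
have -> : sqnorm (vsub y y) = 0 by rewrite /sqnorm /dot /sumO big1 // => i _; rewrite /vsub; ring.
lra.
Qed.

Lemma suffix_regret_base T J : (1 <= J <= T)%N ->
  suffix_regret T J <= 4 * c + c * harm (T - J).+1 J.
Proof.
move=> /andP[J_gt0 _].
apply: Rle_trans (_ : expect_iter (T - J)
    (fun y => mu / 2 * INR (T - J) * sqnorm (vsub y xs) + c * harm (T - J).+1 J) <= _).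
  apply: ler_expect_iter => y Wy; rewrite /regret_from.
  have := sgd_regret J.-1 (ltn0Sn (T - J)) Wy W_xs.
  by rewrite (ltn_predK J_gt0) S_INR; have -> : INR (T - J) + 1 - 1 = INR (T - J) by ring.
rewrite expect_iter_affine.
suff : mu / 2 * INR (T - J) * expect_iter (T - J) (fun y => sqnorm (vsub y xs)) <= 4 * c by lra.
case: (T - J)%N => [|n]; first by rewrite INR_0 Rmult_0_r Rmult_0_l; have := c_gt0; lra.
have n_gt0R : 0 < INR n.+1 by apply: INR_gt0.
have : 0 <= mu / 2 * INR n.+1 by nra.
move=> /Rmult_le_compat_l /(_ (expect_iter_sqdist (ltn0Sn n))) /Rle_trans; apply.
have -> : mu / 2 * INR n.+1 * (4 * (Gb ^ 2 / mu ^ 2) / INR n.+2) = 4 * c - 4 * c / INR n.+2.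
  by rewrite (S_INR n.+1); field; lra.
have : 0 <= 4 * c / INR n.+2.
  by apply: Rmult_le_pos; [have := c_gt0; lra | apply/Rlt_le/Rinv_0_lt_compat/INR_gt0].
lra.
Qed.

Lemma suffix_regret_rec T k : (1 <= k)%N -> (k < T)%N ->
  INR k.+1 * suffix_regret T k <= INR k * suffix_regret T k.+1 + c * harm (T - k) k.+1.
Proof.
move=> k_gt0 k_lt_T.
have := @suffix_regret_le T k.+1 ltac:(lia); rewrite subnSK //.
rewrite (@suffix_regretS T k.+1) ?S_INR /=; [lra | lia].
Qed.

Lemma tail_avg_gap_le T L : (1 <= L <= T)%N ->
  expectN p T.-1 (fun l => F (tail_avg L (run 1 x1 l)) - F xs) <= suffix_regret T L / INR L.
Proof.
move=> /andP[L_gt0 L_le_T]; have L_gt0R := INR_gt0 L_gt0.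
rewrite (_ : T.-1 = (T - L) + L.-1)%N; last by lia.
rewrite expectN_cat /suffix_regret /expect_iter /Rdiv Rmult_comm -expectNZ.
apply: (ler_expectN p_ge0) => l1 size_l1; rewrite /regret_from -expectNZ.
apply: (ler_expectN p_ge0) => l2 size_l2.
rewrite /tail_avg size_sgd_run size_cat size_l1 size_l2 -/(vsum _).
rewrite (_ : ((T - L + L.-1).+1 - L = size l1)%N); last by lia.
rewrite drop_sgd_run size_l1 add1n; set zs := run _ _ l2.
have size_zs : size zs = L by rewrite size_sgd_run size_l2 (ltn_predK L_gt0).
have zs_gt0 : (0 < size zs)%N by rewrite size_zs.
have := convex_fun_mean F_convex zs_gt0; rewrite sumRB_const !size_zs.
have -> : / INR L * (\big[Rplus/0]_(u <- zs) F u - INR L * F xs) =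
  / INR L * \big[Rplus/0]_(u <- zs) F u - F xs by field; lra.
lra.
Qed.

Lemma sgd_tail_avg_bound T L alpha : 0 < alpha < 1 -> (1 <= L <= T)%N ->
  alpha * INR T <= INR L -> INR L < alpha * INR T + 1 ->
  expectN p T.-1 (fun l => F (tail_avg L (run 1 x1 l)) - F xs) <= 12 * c * m_alpha alpha / INR T.
Proof.
move=> alpha01 L_range alpha_le_L L_lt_alpha.
apply: Rle_trans (tail_avg_gap_le L_range) _.
apply: suffix_mean_bound => //; first exact: c_gt0.
- exact: suffix_regret_rec.
- exact: suffix_regret_base.
Qed.

End SGD.

(** * Mini-batches *)

Lemma sumR_partition (I J : finType) (tau : I -> {set J}) (f : J -> R) :
  (forall i i', i != i' -> [disjoint tau i & tau i']) -> (forall j, exists i, j \in tau i) ->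
  \big[Rplus/0]_j f j = \big[Rplus/0]_i \big[Rplus/0]_(j in tau i) f j.
Proof.
move=> tau_disj tau_cover.
under [RHS]eq_bigr do rewrite big_mkcond.
rewrite exchange_big; apply: eq_bigr => j _ /=.
have [i0 j_in] := tau_cover j.
rewrite (bigD1 i0) //= j_in big1 /= ?Rplus_0_r // => i i_neq.
by rewrite (disjointFr (tau_disj i0 i _) j_in) // eq_sym.
Qed.

Section Batches.
Variables (m n b : nat) (g : 'I_n -> vec m -> R) (tau : 'I_(n %/ b) -> {set 'I_n}).
Hypotheses (n_gt0 : (0 < n)%N) (b_dvd_n : (b %| n)%N).
Hypothesis tau_disj : forall i j, i != j -> [disjoint tau i & tau j].
Hypothesis tau_cover : forall j, exists i, j \in tau i.

Lemma batch_size_gt0 : (0 < b)%N.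
Proof. by move: b_dvd_n; case: (posnP b) => [-> | //]; rewrite dvd0n => /eqP; lia. Qed.

Lemma batch_count_gt0 : (0 < n %/ b)%N.
Proof. by rewrite divn_gt0 ?batch_size_gt0 // dvdn_leq. Qed.

Lemma avgF_batch_mean y :
  avgF g y = / INR (n %/ b) * \big[Rplus/0]_(i < n %/ b) batch_fun (tau i) b g y.
Proof.
rewrite /avgF /batch_fun (sumR_partition _ tau_disj tau_cover) -big_distrr /=.
by rewrite -Rmult_assoc -Rinv_mult -mult_INR multE divnK.
Qed.

Lemma avgF_subgradient (h : 'I_(n %/ b) -> vec m -> vec m) :
  (forall i y, is_subgradient (batch_fun (tau i) b g) y (h i y)) ->
  forall x, is_subgradient (avgF g) x (vmean (h^~ x)).
Proof.
move=> h_sub x y; have d_gt0 := INR_gt0 batch_count_gt0.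
rewrite !avgF_batch_mean dot_vmeanl -Rmult_plus_distr_l -big_split.
apply: Rmult_le_compat_l; first by apply/Rlt_le/Rinv_0_lt_compat.
by apply: ler_sumR => i _; apply: h_sub.
Qed.

End Batches.

Lemma avgF_convex m n (g : 'I_n -> vec m -> R) : (0 < n)%N ->
  (forall j, convex_fun (g j)) -> convex_fun (avgF g).
Proof.
move=> n_gt0 g_convex x y t t01; rewrite /avgF.
have n_inv_ge0 : 0 <= / INR n by apply/Rlt_le/Rinv_0_lt_compat/INR_gt0.
have : \big[Rplus/0]_(j < n) g j (vadd (vscal t x) (vscal (1 - t) y)) <=
    \big[Rplus/0]_(j < n) (t * g j x + (1 - t) * g j y).
  by apply: ler_sumR => j _; apply: g_convex.
move=> /(Rmult_le_compat_l _ _ _ n_inv_ge0).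
by rewrite big_split -!big_distrr /=; lra.
Qed.

Lemma ceil_nat_spec x : 0 < x -> x <= INR (ceil_nat x) < x + 1 /\ (1 <= ceil_nat x)%N.
Proof.
move=> x_gt0; rewrite /ceil_nat /Int_part.
have [up_gt up_le] := archimed (- x).
have up_Z : IZR (- (up (- x) - 1)) = 1 - IZR (up (- x)) by rewrite opp_IZR minus_IZR; ring.
have up_pos : (0 < - (up (- x) - 1))%Z by apply: lt_IZR; lra.
rewrite INR_IZR_INZ Z2Nat.id; last lia.
by split; [lra | apply/leP; lia].
Qed.

Unset Implicit Arguments.

Theorem theorem4p1 :
  exists C : R,
  forall (m n b : nat) (W : vec m -> Prop) (Pi : vec m -> vec m)
    (g : 'I_n -> vec m -> R) (mu : R) (xstar : vec m)
    (tau : 'I_(n %/ b) -> {set 'I_n}) (h : 'I_(n %/ b) -> vec m -> vec m)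
    (G : 'I_(n %/ b) -> R) (x1 : vec m) (alpha : R),
    (exists w, W w) -> convex_Rm W -> closed_Rm W -> is_proj W Pi ->
    (forall j, convex_fun (g j)) ->
    0 < mu -> strongly_convex_on mu W (avgF g) ->
    W xstar -> (forall x, W x -> avgF g xstar <= avgF g x) ->
    (0 < n)%N -> (b %| n)%N ->
    (forall i, #|tau i| = b) ->
    (forall i j, i != j -> [disjoint tau i & tau j]) ->
    (forall j, exists i, j \in tau i) ->
    (forall i x, is_subgradient (batch_fun (tau i) b g) x (h i x)) ->
    (forall i, 0 < G i) ->
    (forall i x, W x -> vnorm (h i x) <= G i) ->
    W x1 -> 0 < alpha < 1 ->
    forall (eps : R) (k : nat), 0 < eps -> (1 <= k)%N ->
      C * (Gbar G) ^ 2 * m_alpha alpha / (mu * eps) <= INR k ->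
      expectN (prob G) k.-1
        (fun l => avgF g (tail_avg (ceil_nat (alpha * INR k))
                                   (sgd_run Pi mu h G 1 x1 l))
                  - avgF g xstar) <= eps.
Proof.
exists 6.
move=> m n b W Pi g mu xs tau h G x1 alpha _ W_convex _ Pi_proj g_convex mu_gt0 F_sc W_xs
  xs_min n_gt0 b_dvd_n _ tau_disj tau_cover h_sub G_gt0 h_le_G W_x1 alpha01
  eps k eps_gt0 k_gt0 k_large.
have k_gt0R := INR_gt0 k_gt0.
have ak_gt0 : 0 < alpha * INR k by nra.
have [[L_ge L_lt] L_gt0] := ceil_nat_spec ak_gt0.
have L_le_k : (ceil_nat (alpha * INR k) <= k)%N.
  have : INR (ceil_nat (alpha * INR k)) < INR k.+1 by rewrite S_INR; nra.
  by move=> /INR_lt /ltP.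
apply: Rle_trans (sgd_tail_avg_bound (batch_count_gt0 n_gt0 b_dvd_n) W_convex Pi_proj mu_gt0
  F_sc (avgF_subgradient n_gt0 b_dvd_n tau_disj tau_cover h_sub) G_gt0 h_le_G W_xs xs_min
  W_x1 (avgF_convex n_gt0 g_convex) alpha01 (introT andP (conj L_gt0 L_le_k)) L_ge L_lt) _.
have me_gt0 : 0 < mu * eps by nra.
have := Rmult_le_compat_r _ _ _ (Rlt_le _ _ me_gt0) k_large.
rewrite /Rdiv Rmult_assoc Rinv_l ?Rmult_1_r; last lra.
move=> k_large'.
apply: (Rmult_le_reg_r (INR k * mu)); first nra.
have -> : 12 * (Gbar G ^ 2 / (2 * mu)) * m_alpha alpha * / INR k * (INR k * mu) =
  6 * Gbar G ^ 2 * m_alpha alpha by field; lra.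
lra.
Qed.
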